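(* Let $q=3$, with $G_3$-orbits of planes $\mathcal N_1,\dots,\mathcal N_4$ and of points $\mathcal M_1,\dots,\mathcal M_4$ as in the context. For each pair $(\mathcal N_i,\mathcal M_j)$ every plane of $\mathcal N_i$ contains exactly $t_{ij}$ points of $\mathcal M_j$ and every point of $\mathcal M_j$ lies on exactly $b_{ij}$ planes of $\mathcal N_i$, where, listing $(t_{ij},b_{ij})$ for $j=4,1,3,2$ in this order: $\mathcal N_2$: $(3,3),(2,6),(4,6),(4,3)$; $\mathcal N_3$: $(6,2),(3,3),(0,0),(4,1)$; $\mathcal N_4$: $(6,4),(0,0),(3,3),(4,2)$; $\mathcal N_1$: $(3,4),(1,4),(2,4),(7,7)$.
   Context: Notation. $\mathbb F_q$ is the field with $q$ elements, $\mathbb F_q^+=\mathbb F_q\cup\{\infty\}$. Points of $\mathrm{PG}(3,q)$ are written $\mathbf P(x_0,x_1,x_2,x_3)$ with $x$ a nonzero row vector up to scalars; $\boldsymbol\pi(c_0,c_1,c_2,c_3)$ is the plane $c_0x_0+c_1x_1+c_2x_2+c_3x_3=0$. Put $P(t)=\mathbf P(t^3,t^2,t,1)$ for $t\in\mathbb F_q$, $P(\infty)=\mathbf P(1,0,0,0)$, and $\mathscr C=\{P(t):t\in\mathbb F_q^+\}$ (the twisted cubic). The osculating planes are $\pi_{\rm osc}(t)=\boldsymbol\pi(1,-3t,3t^2,-t^3)$ ($t\in\mathbb F_q$) and $\pi_{\rm osc}(\infty)=\boldsymbol\pi(0,0,0,1)$; these $q+1$ planes are called $\Gamma$-planes. The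 tangent at $P(t)$, $t\in\mathbb F_q$, is the line through $P(t)$ and $\mathbf P(3t^2,2t,1,0)$; the tangent at $P(\infty)$ is the line through $\mathbf P(1,0,0,0)$ and $\mathbf P(0,1,0,0)$. A real chord is a line through two distinct points of $\mathscr C$. For $\alpha\in\mathbb F_{q^2}\setminus\mathbb F_q$, the line of $\mathrm{PG}(3,q^2)$ through $P(\alpha),P(\alpha^q)$ is defined over $\mathbb F_q$, and the corresponding line of $\mathrm{PG}(3,q)$ is an imaginary chord. $G_q$ is the group of all projectivities of $\mathrm{PG}(3,q)$ mapping $\mathscr C$ onto itself. Plane types: $\Gamma$-plane = osculating plane; $\overline{1_{\mathscr C}}$-plane = non-osculating plane meeting $\mathscr C$ in exactly one point; $d_{\mathscr C}$-plane ($d\in\{0,2,3\}$) = plane meeting $\mathscr C$ in exactly $d$ points. For $q=3$ all four $\Gamma$-planes contain the line $\mathcal A:\ x_0=x_3=0$. Point types for $q=3$: $\mathscr C$-point = point of $\mathscr C$; $4_\Gamma$-point = point of $\mathcal A$; TO-point = point not in $\mathscr C\cup\mathcal A$ lying on a tangent; RC-point = point not in $\mathscr C\cup\mathcal A$, on no tangent, lying on a real chord; IC-point = any point of none of the previous types. The $G_3$-orbits are: planes $\mathcal N_1=\{\Gamma\text{- and }\overline{1_{\mathscr C}}\text{-planes}\}$ (16), $\mathcal N_2=\{2_{\mathscr C}\text{-planes}\}$ (12), $\mathcal N_3=\{3_{\mathscr C}\text{-planes}\}$ (4), $\mathcal N_4=\{0_{\mathscr C}\text{-planes}\}$ (8);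 points $\mathcal M_1=\{\mathscr C\text{-points}\}$ (4), $\mathcal M_2=\{4_\Gamma\text{- and IC-points}\}$ (16), $\mathcal M_3=\{\text{TO-points}\}$ (8), $\mathcal M_4=\{\text{RC-points}\}$ (12). *)

(* PG(3,3) over 'F_3, the twisted cubic and its G_3-orbits
   of points and planes (as described by their types in the paper). *)
From HB Require Import structures.
From mathcomp Require Import all_boot all_order all_algebra.
Set Implicit Arguments. Unset Strict Implicit. Unset Printing Implicit Defensive.
Import Order.TTheory GRing.Theory Num.Theory.
Local Open Scope ring_scope.

Notation F := 'F_3.
Notation vec := 'rV[F]_4.

Definition mkv (a b c d : F) : vec := \row_(i < 4) nth 0 [:: a; b; c; d] i.

(* canonical representative of a projective point / plane:
   the first nonzero coordinate equals 1 *)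
Definition normalized (x : vec) : bool :=
  [exists i : 'I_4, (x 0 i == 1) && [forall j : 'I_4, (j < i)%N ==> (x 0 j == 0)]].

(* the points (resp. planes) of PG(3,3), one representative each *)
Definition PGpts : {set vec} := [set x : vec | normalized x].

Definition proj_eq (x y : vec) : bool := [exists k : F, (k != 0) && (y == k *: x)].

Definition incid (c x : vec) : bool := \sum_(i < 4) c 0 i * x 0 i == 0.

(* P(t), t in F_q^+ = option F (None = infinity) *)
Definition Pt (t : option F) : vec :=
  if t is Some s then mkv (s ^+ 3) (s ^+ 2) s 1 else mkv 1 0 0 0.

Definition onC (x : vec) : bool := [exists t : option F, proj_eq x (Pt t)].

Definition osc (t : option F) : vec :=
  if t is Some s then mkv 1 (- (3%:R * s)) (3%:R * s ^+ 2) (- s ^+ 3) else mkv 0 0 0 1.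

Definition onLine (a b x : vec) : bool :=
  [exists l : F, exists m : F, ((l != 0) || (m != 0)) && proj_eq x (l *: a + m *: b)].

(* second point spanning the tangent at P(t) *)
Definition tanDir (t : option F) : vec :=
  if t is Some s then mkv (3%:R * s ^+ 2) (2%:R * s) 1 0 else mkv 0 1 0 0.

Definition onTangent (x : vec) : bool := [exists t : option F, onLine (Pt t) (tanDir t) x].

Definition onRealChord (x : vec) : bool :=
  [exists s : option F, exists t : option F, (s != t) && onLine (Pt s) (Pt t) x].

Definition onA (x : vec) : bool := (x 0 0 == 0) && (x 0 3 == 0).

Definition Cpoint (x : vec) : bool := onC x.
Definition Gam4point (x : vec) : bool := onA x.
Definition TOpoint (x : vec) : bool := ~~ onC x && ~~ onA x && onTangent x.
Definition RCpoint (x : vec) : bool :=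
  ~~ onC x && ~~ onA x && ~~ onTangent x && onRealChord x.
Definition ICpoint (x : vec) : bool :=
  ~~ Cpoint x && ~~ Gam4point x && ~~ TOpoint x && ~~ RCpoint x.

Definition nC (c : vec) : nat := #|[set x in PGpts | onC x && incid c x]|.
Definition GammaPlane (c : vec) : bool := [exists t : option F, proj_eq c (osc t)].
Definition onebarPlane (c : vec) : bool := ~~ GammaPlane c && (nC c == 1%N).

Definition N1 : {set vec} := [set c in PGpts | GammaPlane c || onebarPlane c].
Definition N2 : {set vec} := [set c in PGpts | nC c == 2%N].
Definition N3 : {set vec} := [set c in PGpts | nC c == 3%N].
Definition N4 : {set vec} := [set c in PGpts | nC c == 0%N].
Definition M1 : {set vec} := [set x in PGpts | Cpoint x].
Definition M2 : {set vec} := [set x in PGpts | Gam4point x || ICpoint x].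
Definition M3 : {set vec} := [set x in PGpts | TOpoint x].
Definition M4 : {set vec} := [set x in PGpts | RCpoint x].

Definition tb (N M : {set vec}) (t b : nat) : Prop :=
  (forall c, c \in N -> #|[set x in M | incid c x]| = t) /\
  (forall x, x \in M -> #|[set c in N | incid c x]| = b).

From mathcomp Require Import all_boot all_order all_algebra.
Set Implicit Arguments. Unset Strict Implicit. Unset Printing Implicit Defensive.
Import GRing.Theory.
Local Open Scope ring_scope.

(* PG(3,3) is finite and every notion in the statement is a first-order
   condition over F_3 whose quantifiers range over F_3, F_3^+ or the four
   coordinate indices.  Reading a vector through its coordinates, each such
   notion equals a boolean function on quadruples of field elements in which
   every quantifier is a [has]/[all]/[count] over an explicit enumeration;
   the sixteen incidence numbers are then verified by evaluating these
   functions on the 81 quadruples. *)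

Section EnumeratedQuantifiers.

Variables (T : finType) (s : seq T).
Hypothesis s_full : forall x, x \in s.

Lemma existsE_seq (P : pred T) : [exists x, P x] = has P s.
Proof. by apply/existsP/hasP => [[x Px]|[x _ Px]]; exists x. Qed.

Lemma forallE_seq (P : pred T) : [forall x, P x] = all P s.
Proof. by apply/forallP/allP => Ps x //; apply: Ps. Qed.

End EnumeratedQuantifiers.

Lemma card_set_map (A : Type) (T : finType) (f : A -> T) (s : seq A) (P : pred T) :
  uniq (map f s) -> (forall x, x \in map f s) ->
  #|[set x | P x]| = count (preim f P) s.
Proof.
move=> s_uniq s_full.
have /permP perm_s : perm_eq (enum T) (map f s).
  by apply: uniq_perm => [||x]; rewrite ?enum_uniq ?mem_enum ?s_full.
by rewrite cardsE cardE /enum_mem size_filter -enumT perm_s count_map.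
Qed.

(* The ring operations and the equality test of ['F_3], whose modulus is the
   term [(Zp_trunc (pdiv 3)).+2], evaluate more than ten times slower than
   these equivalent operations on representatives, which the model uses. *)
Definition Flit (n : nat) : F := Ordinal (@ltn_pmod n 3 isT).
Definition addF (a b : F) : F := Flit (a + b).
Definition mulF (a b : F) : F := Flit (a * b).
Definition oppF (a : F) : F := Flit (3 - a).

Definition eqF (a b : F) : bool := eqn a b.

Lemma FlitE n : Flit n = n%:R.
Proof. by apply: val_inj; rewrite /= val_Fp_nat. Qed.

Lemma addFE a b : addF a b = a + b. Proof. exact: val_inj. Qed.
Lemma mulFE a b : mulF a b = a * b. Proof. exact: val_inj. Qed.
Lemma oppFE a : oppF a = - a. Proof. exact: val_inj. Qed.
Lemma eqFE a b : eqF a b = (a == b). Proof. by []. Qed.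

Definition Fs : seq F := [:: Flit 0; Flit 1; Flit 2].

Lemma Fs_full (a : F) : a \in Fs.
Proof.
rewrite (_ : Fs = ord_enum _) ?mem_ord_enum //.
by apply: (inj_map val_inj); rewrite val_ord_enum.
Qed.

Definition Fs_inf : seq (option F) := None :: map Some Fs.

Lemma Fs_inf_full (t : option F) : t \in Fs_inf.
Proof. by case: t => [a|] //; rewrite in_cons map_f ?Fs_full ?orbT. Qed.

Definition ords4 : seq 'I_4 :=
  [:: @Ordinal 4 0 isT; @Ordinal 4 1 isT; @Ordinal 4 2 isT; @Ordinal 4 3 isT].

Lemma ords4_full (i : 'I_4) : i \in ords4.
Proof.
rewrite (_ : ords4 = ord_enum 4) ?mem_ord_enum //.
by apply: (inj_map val_inj); rewrite val_ord_enum.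
Qed.

Definition quad := (F * F * F * F)%type.

Definition vec_of (u : quad) : vec := let: (a, b, c, d) := u in mkv a b c d.

Definition quads : seq quad :=
  [seq (u, d) | u <- [seq (u, c) | u <- [seq (a, b) | a <- Fs, b <- Fs], c <- Fs], d <- Fs].

Definition qeq (u v : quad) : bool :=
  let: (a, b, c, d) := u in let: (a', b', c', d') := v in
  [&& eqF a a', eqF b b', eqF c c' & eqF d d'].

Definition qnth (u : quad) (i : 'I_4) : F :=
  let: (a, b, c, d) := u in nth 0 [:: a; b; c; d] i.

Definition qscale (k : F) (u : quad) : quad :=
  let: (a, b, c, d) := u in (mulF k a, mulF k b, mulF k c, mulF k d).

Definition qadd (u v : quad) : quad :=
  let: (a, b, c, d) := u in let: (a', b', c', d') := v in
  (addF a a', addF b b', addF c c', addF d d').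

Lemma vec_of_entry u i : vec_of u 0 i = qnth u i.
Proof. by case: u => [[[a b] c] d]; rewrite mxE. Qed.

Lemma vec_of_coords (x : vec) : vec_of (x 0 0, x 0 1, x 0 2, x 0 3) = x.
Proof.
by apply/rowP => -[[|[|[|[|i]]]] lt_i4] //; rewrite mxE /=; congr (x 0 _); apply: val_inj.
Qed.

Lemma vec_of_inj : injective vec_of.
Proof.
move=> [[[a b] c] d] [[[a' b'] c'] d'] /rowP eq_uv.
have := eq_uv 0; have := eq_uv 1; have := eq_uv 2; have := eq_uv 3.
by rewrite !mxE /= => -> -> -> ->.
Qed.

Lemma quads_full (x : vec) : x \in map vec_of quads.
Proof.
rewrite -(vec_of_coords x) mem_map; last exact: vec_of_inj.
by do 3![apply: allpairs_f; last exact: Fs_full]; exact: Fs_full.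
Qed.

Lemma card_set_quads (P : pred vec) : #|[set x | P x]| = count (preim vec_of P) quads.
Proof.
apply: card_set_map; last exact: quads_full.
by rewrite map_inj_uniq; [vm_compute | apply: vec_of_inj].
Qed.

Lemma scale_vec_of k u : k *: vec_of u = vec_of (qscale k u).
Proof.
case: u => [[[a b] c] d]; rewrite /qscale !mulFE.
by apply/rowP => -[[|[|[|[|i]]]] ?]; rewrite !mxE.
Qed.

Lemma add_vec_of u v : vec_of u + vec_of v = vec_of (qadd u v).
Proof.
case: u v => [[[a b] c] d] [[[a' b'] c'] d']; rewrite /qadd !addFE.
by apply/rowP => -[[|[|[|[|i]]]] ?]; rewrite !mxE.
Qed.

Lemma eq_vec_of u v : (vec_of u == vec_of v) = qeq u v.
Proof.
rewrite (inj_eq vec_of_inj).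
by case: u v => [[[a b] c] d] [[[a' b'] c'] d']; rewrite /qeq !eqFE !xpair_eqE !andbA.
Qed.

Definition qnormalized (u : quad) : bool :=
  has (fun i : 'I_4 => (qnth u i == Flit 1) &&
                       all (fun j : 'I_4 => (j < i)%N ==> (qnth u j == 0)) ords4) ords4.

Definition qproj (u w : quad) : bool := has (fun k => ~~ eqF k 0 && qeq w (qscale k u)) Fs.

Definition qincid (c x : quad) : bool :=
  let: (c0, c1, c2, c3) := c in let: (x0, x1, x2, x3) := x in
  addF (mulF c0 x0) (addF (mulF c1 x1) (addF (mulF c2 x2) (mulF c3 x3))) == 0.

Definition qPt (t : option F) : quad :=
  if t is Some s then (mulF s (mulF s s), mulF s s, s, Flit 1) else (Flit 1, 0, 0, 0).

Definition qosc (t : option F) : quad :=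
  if t is Some s then
    (Flit 1, oppF (mulF (Flit 3) s), mulF (Flit 3) (mulF s s), oppF (mulF s (mulF s s)))
  else (0, 0, 0, Flit 1).

Definition qtanDir (t : option F) : quad :=
  if t is Some s then (mulF (Flit 3) (mulF s s), mulF (Flit 2) s, Flit 1, 0)
  else (0, Flit 1, 0, 0).

Definition qonC (x : quad) : bool := has (fun t => qproj x (qPt t)) Fs_inf.

Definition qonLine (a b x : quad) : bool :=
  has (fun l => has (fun m =>
    ~~ (eqF l 0 && eqF m 0) && qproj x (qadd (qscale l a) (qscale m b))) Fs) Fs.

Definition qonTangent (x : quad) : bool := has (fun t => qonLine (qPt t) (qtanDir t) x) Fs_inf.

Definition qonRealChord (x : quad) : bool :=
  has (fun s => has (fun t => (s != t) && qonLine (qPt s) (qPt t) x) Fs_inf) Fs_inf.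

Definition qonA (x : quad) : bool := let: (x0, _, _, x3) := x in (x0 == 0) && (x3 == 0).

Definition qC_points : seq quad := filter (fun x => qnormalized x && qonC x) quads.

Definition qnC (c : quad) : nat := count (qincid c) qC_points.

Definition qGamma (c : quad) : bool := has (fun t => qproj c (qosc t)) Fs_inf.

Lemma normalized_vec_of u : normalized (vec_of u) = qnormalized u.
Proof.
rewrite /normalized /qnormalized (existsE_seq ords4_full); apply: eq_has => i /=.
by rewrite (forallE_seq ords4_full) /= !vec_of_entry.
Qed.

Lemma proj_eq_vec_of u w : proj_eq (vec_of u) (vec_of w) = qproj u w.
Proof.
rewrite /proj_eq /qproj (existsE_seq Fs_full); apply: eq_has => k.
by rewrite /= scale_vec_of eq_vec_of eqFE.
Qed.

Lemma incid_vec_of c x : incid (vec_of c) (vec_of x) = qincid c x.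
Proof.
rewrite /incid !big_ord_recl big_ord0 !vec_of_entry.
by case: c x => [[[c0 c1] c2] c3] [[[x0 x1] x2] x3]; rewrite /qincid !addFE !mulFE addr0.
Qed.

Lemma Pt_vec_of t : Pt t = vec_of (qPt t).
Proof. by case: t => [s|]; rewrite /qPt ?mulFE FlitE // -expr2 -exprS. Qed.

Lemma osc_vec_of t : osc t = vec_of (qosc t).
Proof. by case: t => [s|]; rewrite /qosc ?oppFE ?mulFE !FlitE // -expr2 -exprS. Qed.

Lemma tanDir_vec_of t : tanDir t = vec_of (qtanDir t).
Proof. by case: t => [s|]; rewrite /qtanDir ?mulFE !FlitE // -expr2. Qed.

Lemma onC_vec_of x : onC (vec_of x) = qonC x.
Proof.
rewrite /onC /qonC (existsE_seq Fs_inf_full); apply: eq_has => t.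
by rewrite Pt_vec_of proj_eq_vec_of.
Qed.

Lemma onLine_vec_of a b x : onLine (vec_of a) (vec_of b) (vec_of x) = qonLine a b x.
Proof.
rewrite /onLine /qonLine (existsE_seq Fs_full); apply: eq_has => l.
rewrite (existsE_seq Fs_full); apply: eq_has => m.
by rewrite /= !scale_vec_of add_vec_of proj_eq_vec_of !eqFE negb_and.
Qed.

Lemma onTangent_vec_of x : onTangent (vec_of x) = qonTangent x.
Proof.
rewrite /onTangent /qonTangent (existsE_seq Fs_inf_full); apply: eq_has => t.
by rewrite Pt_vec_of tanDir_vec_of onLine_vec_of.
Qed.

Lemma onRealChord_vec_of x : onRealChord (vec_of x) = qonRealChord x.
Proof.
rewrite /onRealChord /qonRealChord (existsE_seq Fs_inf_full); apply: eq_has => s.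
rewrite (existsE_seq Fs_inf_full); apply: eq_has => t.
by rewrite !Pt_vec_of onLine_vec_of.
Qed.

Lemma onA_vec_of x : onA (vec_of x) = qonA x.
Proof. by rewrite /onA !vec_of_entry; case: x => [[[x0 x1] x2] x3]. Qed.

Lemma nC_vec_of c : nC (vec_of c) = qnC c.
Proof.
rewrite /nC card_set_quads /qnC count_filter; apply: eq_count => x.
by rewrite /= inE normalized_vec_of onC_vec_of incid_vec_of andbA [RHS]andbC.
Qed.

Lemma GammaPlane_vec_of c : GammaPlane (vec_of c) = qGamma c.
Proof.
rewrite /GammaPlane /qGamma (existsE_seq Fs_inf_full); apply: eq_has => t.
by rewrite osc_vec_of proj_eq_vec_of.
Qed.

Definition qTO (x : quad) : bool := ~~ qonC x && ~~ qonA x && qonTangent x.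
Definition qRC (x : quad) : bool := ~~ qonC x && ~~ qonA x && ~~ qonTangent x && qonRealChord x.
Definition qIC (x : quad) : bool := ~~ qonC x && ~~ qonA x && ~~ qTO x && ~~ qRC x.

Definition qN1 (c : quad) : bool :=
  qnormalized c && (qGamma c || ~~ qGamma c && (qnC c == 1%N)).
Definition qN2 (c : quad) : bool := qnormalized c && (qnC c == 2%N).
Definition qN3 (c : quad) : bool := qnormalized c && (qnC c == 3%N).
Definition qN4 (c : quad) : bool := qnormalized c && (qnC c == 0%N).
Definition qM1 (x : quad) : bool := qnormalized x && qonC x.
Definition qM2 (x : quad) : bool := qnormalized x && (qonA x || qIC x).
Definition qM3 (x : quad) : bool := qnormalized x && qTO x.
Definition qM4 (x : quad) : bool := qnormalized x && qRC x.

Lemma mem_N1 u : (vec_of u \in N1) = qN1 u.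
Proof. by rewrite !inE normalized_vec_of /onebarPlane GammaPlane_vec_of nC_vec_of. Qed.

Lemma mem_N2 u : (vec_of u \in N2) = qN2 u.
Proof. by rewrite !inE normalized_vec_of nC_vec_of. Qed.

Lemma mem_N3 u : (vec_of u \in N3) = qN3 u.
Proof. by rewrite !inE normalized_vec_of nC_vec_of. Qed.

Lemma mem_N4 u : (vec_of u \in N4) = qN4 u.
Proof. by rewrite !inE normalized_vec_of nC_vec_of. Qed.

Lemma mem_M1 u : (vec_of u \in M1) = qM1 u.
Proof. by rewrite !inE normalized_vec_of /Cpoint onC_vec_of. Qed.

Lemma mem_M2 u : (vec_of u \in M2) = qM2 u.
Proof.
rewrite !inE normalized_vec_of /ICpoint /Cpoint /Gam4point /TOpoint /RCpoint.
by rewrite onC_vec_of onA_vec_of onTangent_vec_of onRealChord_vec_of.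
Qed.

Lemma mem_M3 u : (vec_of u \in M3) = qM3 u.
Proof. by rewrite !inE normalized_vec_of /TOpoint onC_vec_of onA_vec_of onTangent_vec_of. Qed.

Lemma mem_M4 u : (vec_of u \in M4) = qM4 u.
Proof.
rewrite !inE normalized_vec_of /RCpoint.
by rewrite onC_vec_of onA_vec_of onTangent_vec_of onRealChord_vec_of.
Qed.

Definition tb_check (Ns Ms : seq quad) (t b : nat) : bool :=
  all (fun c => count (qincid c) Ms == t) Ns && all (fun x => count (qincid^~ x) Ns == b) Ms.

Lemma tb_check_sound (N M : {set vec}) (qN qM : pred quad) (t b : nat) :
  (forall u, (vec_of u \in N) = qN u) -> (forall u, (vec_of u \in M) = qM u) ->
  tb_check (filter qN quads) (filter qM quads) t b -> tb N M t b.
Proof.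
move=> memN memM /andP[/allP planes_ok /allP points_ok]; split.
- move=> c0; have /mapP[c quads_c ->] := quads_full c0; rewrite memN => Nc.
  rewrite -(eqP (planes_ok c _)) ?mem_filter ?Nc // card_set_quads count_filter.
  by apply: eq_count => x; rewrite /= memM incid_vec_of andbC.
- move=> x0; have /mapP[x quads_x ->] := quads_full x0; rewrite memM => Mx.
  rewrite -(eqP (points_ok x _)) ?mem_filter ?Mx // card_set_quads count_filter.
  by apply: eq_count => c; rewrite /= memN incid_vec_of andbC.
Qed.

Theorem mainTheorem11 :
  (tb N2 M4 3 3 /\ tb N2 M1 2 6 /\ tb N2 M3 4 6 /\ tb N2 M2 4 3) /\
  (tb N3 M4 6 2 /\ tb N3 M1 3 3 /\ tb N3 M3 0 0 /\ tb N3 M2 4 1) /\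
  (tb N4 M4 6 4 /\ tb N4 M1 0 0 /\ tb N4 M3 3 3 /\ tb N4 M2 4 2) /\
  (tb N1 M4 3 4 /\ tb N1 M1 1 4 /\ tb N1 M3 2 4 /\ tb N1 M2 7 7).
Proof.
split; [|split; [|split]]; (split; [|split; [|split]]).
- by apply: (tb_check_sound mem_N2 mem_M4); vm_compute.
- by apply: (tb_check_sound mem_N2 mem_M1); vm_compute.
- by apply: (tb_check_sound mem_N2 mem_M3); vm_compute.
- by apply: (tb_check_sound mem_N2 mem_M2); vm_compute.
- by apply: (tb_check_sound mem_N3 mem_M4); vm_compute.
- by apply: (tb_check_sound mem_N3 mem_M1); vm_compute.
- by apply: (tb_check_sound mem_N3 mem_M3); vm_compute.
- by apply: (tb_check_sound mem_N3 mem_M2); vm_compute.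
- by apply: (tb_check_sound mem_N4 mem_M4); vm_compute.
- by apply: (tb_check_sound mem_N4 mem_M1); vm_compute.
- by apply: (tb_check_sound mem_N4 mem_M3); vm_compute.
- by apply: (tb_check_sound mem_N4 mem_M2); vm_compute.
- by apply: (tb_check_sound mem_N1 mem_M4); vm_compute.
- by apply: (tb_check_sound mem_N1 mem_M1); vm_compute.
- by apply: (tb_check_sound mem_N1 mem_M3); vm_compute.
- by apply: (tb_check_sound mem_N1 mem_M2); vm_compute.
Qed.
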